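(* Consider the following setting and algorithm (the ''MPTPT-based routing algorithm''). Network: a directed graph $G_0=(V_0,E_0)$ with $V_0=V_{sw}\cup V_{pm}$, $V_{sw}\cap V_{pm}=\emptyset$ (switch nodes and physical-machine (PM) nodes). Each PM $u\in V_{pm}$ is connected to exactly one switch by two links (one in each direction), and no switch is connected to more than one PM; for a switch $v$ attached to a PM we write $\hat v$ for that PM, and $V_{sw\rightarrow pm}\subseteq V_{sw}$ is the set of such switches. All other edges join two switches. Each edge $e$ has capacity $g(e)\ge 0$ and each PM $u$ has processing capacity $b(u)\ge 0$. There are $M$ commodities $com_i=\langle s_i,t_i,d_i,c_i\rangle$, $i=1,\dots,M$, with source $s_i\in V_{sw}$, destination $t_i\in V_{sw}$, demand $d_i>0$ and class $c_i\in\{1,\dots,C\}$, where $C$ is the number of distinct classes; a class $k$ has a per-unit processing cost $p(k)>0$. Let $V_T$ be the set of distinct destinations $\{t_1,\dots,t_M\}$. Step 1. Build $G_1=(V_1,E_1)$: delete the PM nodes and their incident edges, add $C$ new nodes $\mathcal P_1,\dots,\mathcal P_C$ (set $V_{\mathcal P}$), and add an edge $(v,\mathcal P_k)$ for every $v\in V_{sw\rightarrow pm}$ and every $k$. For $t=\mathcal P_k$ and $v\in V_{sw}$ let $d_t(v)$ be the total demand of commodities of class $k$ with source $v$ ($d_t(v)=0$ for $v\in V_{\mathcal P}$). Compute a basic feasible solution $(f_t(e))_{t\in V_{\mathcal P},e\in E_1}$ of the LP: minimize $\sum_{e\in E_1,t\in V_{\mathcal P}} f_t(e)$ subject to (i)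 for all $t\in V_{\mathcal P}$ and $v\in V_1$, $v\ne t$: $\sum_{(v,w)\in E_1}f_t(v,w)-\sum_{(u,v)\in E_1}f_t(u,v)=d_t(v)$; (ii) for all $e\in E_1\cap E_0$: $\sum_t f_t(e)\le g(e)$; (iii) for all $v\in V_{sw\rightarrow pm}$: $\sum_t f_t(v,t)\le\min\{g(v,\hat v),g(\hat v,v)\}$; (iv) for all $v\in V_{sw\rightarrow pm}$: $\sum_{t=\mathcal P_k} p(k) f_t(v,t)\le b(\hat v)$; (v) $f_t(e)\ge 0$. Then apply Flow2Trees$(t)$ (defined below) to this solution for every $t\in V_{\mathcal P}$. Step 2. Build $G_2=(V_2,E_2)$ from $G_1$ by deleting $V_{\mathcal P}$ and incident edges (so $V_2=V_{sw}$, $E_2=E_1\cap E_0$), with residual capacities $\bar g(e)=g(e)-\sum_t f_t(e)$ from the Step 1 solution. Form commodities for Step 2 whose sources lie in $V_{sw\rightarrow pm}$ and whose destinations lie in $V_T$: for each Step 1 tree carrying class-$c$ traffic from source $s$ through switch $v\in V_{sw\rightarrow pm}$, that traffic is split among the destinations $t$ of class-$c$ commodities with source $s$ in proportion to their demands, and becomes demand from $v$ to $t$; let $d_t(v)$ be the resulting total demand from $v$ to $t\in V_T$. Compute a basic feasible solution of the LP: minimize $\sum_{e\in E_2,t\in V_T}f_t(e)$ subject to flow conservation $\sum_{(v,w)\in E_2}f_t(v,w)-\sum_{(u,v)\in E_2}f_t(u,v)=d_t(v)$ for all $t\in V_T$, $v\in V_2$, $v\neq t$; $\sum_{t\in V_T}f_t(e)\le\bar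 g(e)$ for all $e\in E_2$; $f_t(e)\ge 0$. Then apply Flow2Trees$(t)$ for every $t\in V_T$. Flow2Trees$(t)$, given a graph, a root $t$ and a flow $f_t$ to $t$: while some source $s$ still has positive residual demand to $t$, construct, using only edges $e$ with $f_t(e)>0$, a multipoint-to-point tree $R$ (a tree with all edges oriented toward the root $t$) spanning all sources with residual demand to $t$, move as much flow as possible onto $R$ (i.e. route amounts from the sources along their paths in $R$, subtracting them from the residual demands and from $f_t$ on the edges used, keeping everything nonnegative, and maximizing the amount moved), and output $R$. Assume both LPs are feasible. Then the total number of multipoint-to-point trees produced by the algorithm (over both steps) is at most $C+2|E_0|+|V_T|-2|V_{pm}|$.
   Context: A multipoint-to-point tree rooted at a node $t$ is a directed tree in which every edge is oriented toward $t$; it is used to carry traffic from several sources to the single destination $t$. A basic feasible solution of an LP is a vertex of its feasible polyhedron. $|A|$ denotes the cardinality of a set $A$. *)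

From HB Require Import structures.
From mathcomp Require Import all_boot all_order all_algebra.
Set Implicit Arguments. Unset Strict Implicit. Unset Printing Implicit Defensive.
Import Order.TTheory GRing.Theory Num.Theory.
Local Open Scope ring_scope.

(* Linear programming: a basic feasible solution is a vertex (extreme   *)
(* point) of the feasible polyhedron; the algorithm computes an optimal *)
(* one (a vertex minimizing the objective).                             *)
Section LP.
Variable R : realFieldType.

Definition extreme_point (X : Type) (P : (X -> R) -> Prop) (x : X -> R) : Prop :=
  P x /\
  forall (y z : X -> R) (l : R), P y -> P z -> 0 < l -> l < 1 ->
    (forall i, x i = l * y i + (1 - l) * z i) -> forall i, y i = z i.

Definition optimal_bfs (X : Type) (P : (X -> R) -> Prop) (obj : (X -> R) -> R)
  (x : X -> R) : Prop :=
  extreme_point P x /\ forall y, P y -> obj x <= obj y.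
End LP.

(* A multipoint-to-point tree is given by its vertex set S (containing  *)
(* t) and a parent map par (convention: par t = t); every v in S\{t}    *)
(* has its out-edge (v, par v) in E, with positive residual flow, and   *)
(* following par from v leads to t.  The path of a source s in the tree *)
(* is its par-orbit; amounts a s are routed along these paths.          *)
Section Flow2Trees.
Variables (R : realFieldType) (V : finType) (E : rel V) (t : V).

Record tree_step := TreeStep {
  tr_vert : {set V};
  tr_par  : V -> V;
  tr_amt  : V -> R }.

Definition is_mpt_tree (f : V -> V -> R) (S : {set V}) (par : V -> V) : Prop :=
  [/\ t \in S, par t = t &
      forall v, v \in S -> v != t ->
        [/\ par v \in S, E v (par v), 0 < f v (par v) & fconnect par v t]].

Definition tree_load (S : {set V}) (par : V -> V) (a : V -> R) (v : V) : R :=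
  \sum_(s in S | fconnect par s v) a s.

Definition feasible_amounts (D : V -> R) (f : V -> V -> R) (S : {set V})
  (par : V -> V) (a : V -> R) : Prop :=
  [/\ forall s, 0 <= a s,
      forall s, a s <= D s,
      forall s, s \notin S -> a s = 0 &
      forall v, v \in S -> v != t -> tree_load S par a v <= f v (par v)].

Definition residual_flow (f : V -> V -> R) (S : {set V}) (par : V -> V)
  (a : V -> R) : V -> V -> R :=
  fun x y => f x y -
    (if [&& x \in S, x != t & y == par x] then tree_load S par a x else 0).

Definition flow2trees_step (D : V -> R) (f : V -> V -> R) (st : tree_step) : Prop :=
  [/\ is_mpt_tree f (tr_vert st) (tr_par st),
      forall s, 0 < D s -> s \in tr_vert st,
      feasible_amounts D f (tr_vert st) (tr_par st) (tr_amt st) &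
      forall a', feasible_amounts D f (tr_vert st) (tr_par st) a' ->
        \sum_s a' s <= \sum_s tr_amt st s].

Fixpoint flow2trees_run (D : V -> R) (f : V -> V -> R) (r : seq tree_step)
  : Prop :=
  match r with
  | [::] => forall s, D s <= 0
  | st :: r' =>
      [/\ exists s, 0 < D s,
          flow2trees_step D f st &
          flow2trees_run (fun s => D s - tr_amt st s)
            (residual_flow f (tr_vert st) (tr_par st) (tr_amt st)) r']
  end.
End Flow2Trees.

Section Network.
Variables (R : realFieldType) (V0 : finType) (E0 : rel V0) (Vpm : {set V0}).
Variables (g : V0 -> V0 -> R) (b : V0 -> R).
Variables (M C : nat) (src dst : 'I_M -> V0) (dem : 'I_M -> R)
          (cls : 'I_M -> 'I_C) (p : 'I_C -> R).

Definition pm_structure : Prop :=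
  (forall u, u \in Vpm -> exists v,
     [/\ v \notin Vpm, E0 u v, E0 v u & forall w, E0 u w || E0 w u -> w = v]) /\
  (forall v u1 u2, v \notin Vpm -> u1 \in Vpm -> u2 \in Vpm ->
     E0 u1 v || E0 v u1 -> E0 u2 v || E0 v u2 -> u1 = u2).

Definition Vswpm : {set V0} :=
  [set v | (v \notin Vpm) && [exists u in Vpm, E0 u v]].

Definition VT : {set V0} := [set dst i | i : 'I_M].

Definition nb_edges : nat := #|[set e : V0 * V0 | E0 e.1 e.2]|.

(* Step 1: G1 has vertices V0 + 'I_C (inr k = P_k); PM nodes are kept  *)
(* only as isolated vertices (they carry no edge and no demand).        *)
Definition V1 := (V0 + 'I_C)%type.

Definition E1 : rel V1 := fun x y =>
  match x, y with
  | inl u, inl v => [&& E0 u v, u \notin Vpm & v \notin Vpm]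
  | inl u, inr _ => u \in Vswpm
  | _, _ => false
  end.

Definition d1 (k : 'I_C) (x : V1) : R :=
  match x with
  | inl v => \sum_(i | (src i == v) && (cls i == k)) dem i
  | inr _ => 0
  end.

(* variables f_t(e) of the LP, t = P_k, e = (x,y) *)
Definition X1 := ('I_C * V1 * V1)%type.

Definition lp1_feasible (f : X1 -> R) : Prop :=
  [/\ forall k x y, ~~ E1 x y -> f (k, x, y) = 0,
      forall k x y, 0 <= f (k, x, y),
      forall k v, v != inr k ->
        \sum_w f (k, v, w) - \sum_u f (k, u, v) = d1 k v,
      forall u v, E1 (inl u) (inl v) -> \sum_k f (k, inl u, inl v) <= g u v &
      (forall v u, v \in Vswpm -> u \in Vpm -> E0 u v ->
        \sum_k f (k, inl v, inr k) <= Num.min (g v u) (g u v)) /\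
      (forall v u, v \in Vswpm -> u \in Vpm -> E0 u v ->
        \sum_k p k * f (k, inl v, inr k) <= b u)].

Definition lp_obj (X : finType) (f : X -> R) : R := \sum_x f x.

Definition E2 : rel V0 := fun u v => [&& E0 u v, u \notin Vpm & v \notin Vpm].

Definition gbar (f1 : X1 -> R) (u v : V0) : R :=
  g u v - \sum_k f1 (k, inl u, inl v).

Definition ratio (s : V0) (k : 'I_C) (t : V0) : R :=
  (\sum_(i | [&& src i == s, cls i == k & dst i == t]) dem i) /
  (\sum_(i | (src i == s) && (cls i == k)) dem i).

(* demand from v to t in Step 2, obtained from the Step 1 trees: the    *)
(* amount routed from s through v into P_k (i.e. par v = P_k) is split  *)
(* among the destinations in proportion to the demands.                 *)
Definition d2 (r1 : 'I_C -> seq (tree_step R V1)) (t v : V0) : R :=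
  \sum_k \sum_(st <- r1 k)
     \sum_(s : V0 | fconnect (tr_par st) (inl s) (inl v)
                    && (tr_par st (inl v) == inr k))
        tr_amt st (inl s) * ratio s k t.

(* variables f_t(e), t in V_T, e = (x,y) *)
Definition X2 := (V0 * V0 * V0)%type.

Definition lp2_feasible (f1 : X1 -> R) (r1 : 'I_C -> seq (tree_step R V1))
  (f : X2 -> R) : Prop :=
  [/\ forall t x y, ~~ ((t \in VT) && E2 x y) -> f (t, x, y) = 0,
      forall t x y, 0 <= f (t, x, y),
      forall t v, t \in VT -> v != t ->
        \sum_w f (t, v, w) - \sum_u f (t, u, v) = d2 r1 t v &
      forall x y, E2 x y -> \sum_(t in VT) f (t, x, y) <= gbar f1 x y].

End Network.

From HB Require Import structures.
From mathcomp Require Import all_boot all_order all_algebra.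
From mathcomp Require Import lra zify.
Set Implicit Arguments. Unset Strict Implicit. Unset Printing Implicit Defensive.
Import Order.TTheory GRing.Theory Num.Theory.
Local Open Scope ring_scope.

(* A vertex of a polyhedron has at most as many positive coordinates as
   constraints tight at it.  In both LPs the constraints that can be tight,
   besides nonnegativity, are flow conservation of a commodity at a node that
   carries flow of it ("alive" node) and the coupling constraints: one
   capacity row per switch-to-switch edge, plus in Step 1 a link-capacity
   row and a processing row per switch attached to a PM.  On the other hand,
   a run of Flow2Trees(t) outputs at most [#positive edges - #alive nodes + 1]
   trees, since every tree but the last one zeroes the out-edge of each node
   it empties plus one more edge.  Summing over commodities, Step 1 outputs
   at most [C + |E_sw| + 2 |V_sw->pm|] trees and Step 2 at most
   [|V_T| + |E_sw|], where [E_sw] is the set of switch-to-switch edges; and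
   [|E_sw| + |V_pm| + |V_sw->pm| <= |E_0|], as every PM has an out-edge and
   every attached switch an edge into its PM. *)

Section ExtremePointSupport.
Variables (R : realFieldType) (X J : finType).

Lemma nontrivial_solution_supported (S : {set X}) (Js : {set J}) (c : J -> X -> R) :
  (#|Js| < #|S|)%N ->
  exists2 y : X -> R, exists i, y i != 0 &
    (forall i, i \notin S -> y i = 0) /\ (forall j, j \in Js -> \sum_i c j i * y i = 0).
Proof.
move=> lt_Js_S.
have [x0 Sx0] : exists x0, x0 \in S.
  by apply/set0Pn; rewrite -card_gt0; apply: leq_ltn_trans lt_Js_S.
pose A : 'M[R]_(#|S|, #|Js|) := \matrix_(a, b) c (enum_val b) (enum_val a).
have : kermx A != 0.
  rewrite kermx_eq0; apply/negP => /eqP rkA.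
  by move: (rank_leq_col A); rewrite rkA leqNgt lt_Js_S.
case/matrix0Pn => a [b] kerAab.
pose v := row a (kermx A).
have vA0 : v *m A = 0 by rewrite /v -row_mul mulmx_ker row0.
exists (fun x => if x \in S then v 0 (enum_rank_in Sx0 x) else 0).
  by exists (enum_val b); rewrite enum_valP enum_valK_in /v mxE.
split=> [i /negbTE -> // | j Jsj].
rewrite (bigID (fun i => i \in S)) /= [X in _ + X]big1 ?addr0; last first.
  by move=> i /negbTE ->; rewrite mulr0.
rewrite (eq_bigr (fun i => c j i * v 0 (enum_rank_in Sx0 i))); last by move=> i ->.
have kerA_j : \sum_a v 0 a * A a (enum_rank_in Jsj j) = 0.
  have := congr1 (fun N : 'M[R]_(1, #|Js|) => N 0 (enum_rank_in Jsj j)) vA0.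
  by rewrite [LHS]mxE [RHS]mxE.
rewrite big_enum_val -{}[RHS]kerA_j; apply: eq_bigr => i _.
by rewrite enum_valK_in !mxE (enum_rankK_in Jsj Jsj) mulrC.
Qed.

(* Otherwise a kernel direction [y] of the tight constraints gives two
   feasible points [x +- e y] whose midpoint is [x]. *)
Lemma extreme_point_support_le (P : (X -> R) -> Prop) (x : X -> R)
    (Js : {set J}) (c : J -> X -> R) :
  extreme_point P x -> (forall i, 0 <= x i) ->
  (forall (y : X -> R) (e : R), 0 < e -> (forall i, x i = 0 -> y i = 0) ->
     (forall j, j \in Js -> \sum_i c j i * y i = 0) ->
     (forall i, e * `|y i| <= x i) -> P (fun i => x i + e * y i)) ->
  (#|[set i | (0 < x i)%R]| <= #|Js|)%N.
Proof.
move=> [_ x_extreme] x_ge0 perturb.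
rewrite leqNgt; apply/negP => /(nontrivial_solution_supported c).
case=> y [i0 yi0] [y_supp y_rows].
have y0 i : x i = 0 -> y i = 0.
  by move=> xi0; apply: y_supp; rewrite inE xi0 ltxx.
pose S := \sum_i `|y i| / x i.
have S_ge0 : 0 <= S by apply: sumr_ge0 => i _; apply: divr_ge0.
pose e := (1 + S)^-1.
have e_gt0 : 0 < e by rewrite invr_gt0; lra.
have e_small i : e * `|y i| <= x i.
  have [xi0 | xi_neq0] := eqVneq (x i) 0; first by rewrite y0 // normr0 mulr0 xi0.
  have xi_gt0 : 0 < x i by rewrite lt_def xi_neq0 x_ge0.
  have : `|y i| / x i <= S.
    by rewrite /S (bigD1 i) //= lerDl; apply: sumr_ge0 => k _; apply: divr_ge0.
  rewrite ler_pdivrMr // => le_yS.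
  rewrite /e mulrC ler_pdivrMr; nra.
have Pplus := perturb y e e_gt0 y0 y_rows e_small.
have Pminus : P (fun i => x i + e * - y i).
  apply: perturb => // [i /y0 -> | j /y_rows rows_j | i]; first by rewrite oppr0.
    by under eq_bigr do rewrite mulrN; rewrite sumrN rows_j oppr0.
  by rewrite normrN.
have /(_ i0) : forall i, x i + e * y i = x i + e * - y i.
  by apply: (x_extreme _ _ (1 / 2) Pplus Pminus) => [||i]; lra.
move=> eq_i0; have /eqP : e * y i0 = 0 by lra.
by rewrite mulf_eq0 gt_eqF // (negbTE yi0).
Qed.

Lemma perturb_ge0 (x y e : R) : 0 < e -> e * `|y| <= x -> 0 <= x + e * y.
Proof.
move=> e_gt0 le_ey_x; have : e * - y <= e * `|y| by rewrite ler_pM2l // -normrN ler_norm.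
lra.
Qed.

End ExtremePointSupport.

Section Flow2TreesCount.
Variables (R : realFieldType) (V : finType) (E : rel V) (t : V).
Implicit Types (D a : V -> R) (f : V -> V -> R) (S : {set V}) (par : V -> V).

Definition alive f : {set V} := [set v | (v != t) && [exists w, 0 < f v w]].

Definition pos_edges f : {set V * V} := [set e | 0 < f e.1 e.2].

Definition serves D f : Prop :=
  [/\ forall x y, 0 <= f x y, forall v, 0 <= D v, D t <= 0 &
      forall v, v != t -> D v <= \sum_w f v w - \sum_u f u v].

Lemma card_alive_le f : (#|alive f| <= #|pos_edges f|)%N.
Proof.
apply: leq_trans (leq_imset_card fst (pos_edges f)); apply: subset_leq_card.
apply/subsetP => v; rewrite inE => /andP[_ /existsP[w fvw]].
by apply/imsetP; exists (v, w); rewrite ?inE.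
Qed.

Lemma dead_node_flow0 D f v : serves D f -> v != t -> v \notin alive f ->
  (forall w, f v w = 0) /\ (forall u, f u v = 0).
Proof.
move=> [f_ge0 D_ge0 _ supply] vt; rewrite inE vt /= => /existsPn no_out.
have out0 w : f v w = 0 by apply/eqP; rewrite eq_le f_ge0 andbT leNgt no_out.
split=> // u; apply/eqP; rewrite eq_le f_ge0 andbT.
have := supply v vt; rewrite big1 => [|w _]; last exact: out0.
rewrite sub0r.
have : f u v <= \sum_u f u v by rewrite (bigD1 u) //= lerDl sumr_ge0.
have := D_ge0 v; lra.
Qed.

Lemma alive_of_inflow D f u v : serves D f -> v != t -> 0 < f u v -> v \in alive f.
Proof.
move=> serves_f vt fuv; apply/contraT => dead.
by have [_ in0] := dead_node_flow0 serves_f vt dead; rewrite in0 ltxx in fuv.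
Qed.

Lemma alive_of_demand D f v : serves D f -> v != t -> 0 < D v -> v \in alive f.
Proof.
move=> serves_f vt Dv; apply/contraT => dead.
have [out0 in0] := dead_node_flow0 serves_f vt dead.
have [_ _ _ /(_ v vt)] := serves_f.
by rewrite !big1 // subr0 => Dv_le0; have := lt_le_trans Dv Dv_le0; rewrite ltxx.
Qed.

Section Tree.
Variables (f : V -> V -> R) (S : {set V}) (par : V -> V).
Hypothesis tree : is_mpt_tree E t f S par.

Lemma iter_par_in_tree s n : s \in S -> iter n par s \in S.
Proof.
have [tS par_t in_tree] := tree; move=> sS; elim: n => //= n IH.
have [-> | nt] := eqVneq (iter n par s) t; first by rewrite par_t.
by have [] := in_tree _ IH nt.
Qed.

Lemma tree_child_on_path s v : s \in S -> s != v -> v != t -> fconnect par s v ->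
  exists u, [/\ u \in S, u != t, par u = v & fconnect par s u].
Proof.
move=> sS sv vt /iter_findex; case: (findex _ _ _) => [|m] /= iter_v.
  by rewrite iter_v eqxx in sv.
have [_ par_t _] := tree.
exists (iter m par s); split; rewrite ?iter_par_in_tree ?fconnect_iter //.
by apply: contra vt => /eqP iter_t; rewrite -iter_v iter_t par_t.
Qed.

Lemma tree_load_split a v : (forall s, 0 <= a s) -> v \in S -> v != t ->
  tree_load S par a v <=
  a v + \sum_(u | (u \in S) && (u != t) && (par u == v)) tree_load S par a u.
Proof.
move=> a_ge0 vS vt.
rewrite /tree_load (bigD1 v) /=; last by rewrite vS connect0.
rewrite lerD2l.
pose G s u := if fconnect par s u then a s else 0.
apply: (@le_trans _ _ (\sum_(s | (s \in S) && fconnect par s v && (s != v))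
   \sum_(u | (u \in S) && (u != t) && (par u == v)) G s u)).
  apply: ler_sum => s /andP[/andP[sS fsv] sv].
  have [u [uS ut par_u fsu]] := tree_child_on_path sS sv vt fsv.
  rewrite (bigD1 u) /=; last by rewrite uS ut par_u eqxx.
  rewrite /G fsu lerDl; apply: sumr_ge0 => w _; case: ifP => // _.
rewrite exchange_big /=; apply: ler_sum => u _.
rewrite [X in _ <= X]big_mkcond [X in X <= _]big_mkcond /=; apply: ler_sum => s _.
by rewrite /G; case: (s \in S) => //=; case: ifP => //; case: ifP.
Qed.

End Tree.

Lemma residual_flow_le f S par a x y : (forall s, 0 <= a s) ->
  residual_flow t f S par a x y <= f x y.
Proof.
move=> a_ge0; rewrite /residual_flow lerBlDr lerDl.
by case: ifP => // _; apply: sumr_ge0.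
Qed.

Lemma serves_residual D f S par a : serves D f -> flow2trees_step E t D f (TreeStep S par a) ->
  serves (fun s => D s - a s) (residual_flow t f S par a).
Proof.
rewrite /flow2trees_step /feasible_amounts /=.
move=> [f_ge0 D_ge0 Dt supply] [tree spans [a_ge0 a_le_D _ a_fits] _].
split=> [x y | v | | v vt] /=.
- rewrite /residual_flow; case: ifP => [/and3P[xS xt /eqP ->] | _]; last by rewrite subr0.
  by rewrite subr_ge0; apply: a_fits.
- by rewrite subr_ge0.
- by have := a_ge0 t; lra.
have out_eq : \sum_w residual_flow t f S par a v w =
    \sum_w f v w - (if v \in S then tree_load S par a v else 0).
  rewrite /residual_flow sumrB; congr (_ - _).
  have [vS | vS] := boolP (v \in S); last by apply: big1.
  rewrite (bigD1 (par v)) //= vt eqxx /= big1 ?addr0 // => w /negbTE wn.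
  by rewrite wn.
have in_eq : \sum_u residual_flow t f S par a u v = \sum_u f u v -
    \sum_(u | (u \in S) && (u != t) && (par u == v)) tree_load S par a u.
  rewrite /residual_flow sumrB [X in _ = _ - X]big_mkcond /=; congr (_ - _).
  by apply: eq_bigr => u _; rewrite (eq_sym v (par u)) andbA.
have load_v : (if v \in S then tree_load S par a v else 0) <=
    a v + \sum_(u | (u \in S) && (u != t) && (par u == v)) tree_load S par a u.
  case: ifP => vS; first by have := tree_load_split tree a_ge0 vS vt.
  by apply: addr_ge0 => //; do 2 apply: sumr_ge0 => ? _.
rewrite out_eq in_eq; have := supply v vt; lra.
Qed.

Lemma tree_load_bump S par a s d w : s \in S ->
  tree_load S par (fun x => if x == s then a x + d else a x) w =
  tree_load S par a w + (if fconnect par s w then d else 0).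
Proof.
move=> sS; rewrite /tree_load.
have [fsw | fsw] := boolP (fconnect par s w); last first.
  rewrite addr0; apply: eq_bigr => x /andP[_ fxw].
  by case: eqP => // xs; rewrite -xs fxw in fsw.
rewrite (bigD1 s) ?sS //= [in RHS](bigD1 s) ?sS //= eqxx -addrA [d + _]addrC addrA.
by congr (_ + _ + _); apply: eq_bigr => x /andP[_ /negbTE ->].
Qed.

(* Otherwise the amount routed from [s] could be increased by some [d > 0]. *)
Lemma max_routing_saturates D f S par a s : flow2trees_step E t D f (TreeStep S par a) ->
  a s < D s ->
  exists w, [/\ w \in S, w != t, fconnect par s w & f w (par w) <= tree_load S par a w].
Proof.
rewrite /flow2trees_step /feasible_amounts /=.
move=> [tree spans [a_ge0 a_le_D a_out a_fits] a_max] a_lt_D.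
have sS : s \in S by apply: spans; have := a_ge0 s; lra.
pose Q w := [&& w \in S, w != t & fconnect par s w].
have [/existsP[w /andP[/and3P[? ? ?] ?]] | /existsPn unsat] :=
  boolP [exists w, Q w && (f w (par w) <= tree_load S par a w)]; first by exists w.
exfalso.
pose d := \big[Order.min/(D s - a s)]_(w | Q w) (f w (par w) - tree_load S par a w).
have d_gt0 : 0 < d.
  apply: lt_bigmin => [|w Qw]; first by rewrite subr_gt0.
  by move: (unsat w); rewrite Qw /= -ltNge subr_gt0.
pose a' x := if x == s then a x + d else a x.
have : \sum_x a' x <= \sum_x a x.
  apply: a_max; split=> [x | x | x xS | w wS wt].
  - by rewrite /a'; case: eqP => _; have := a_ge0 x; lra.
  - rewrite /a'; case: eqP => [-> | _]; last exact: a_le_D.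
    by have := bigmin_le_id (index_enum V) (D s - a s) Q
      (fun w => f w (par w) - tree_load S par a w); rewrite -/d; lra.
  - by rewrite /a'; case: eqP => [xs | _]; [rewrite xs sS in xS | exact: a_out].
  - rewrite /a' tree_load_bump //; case: ifP => [fsw | _]; last by rewrite addr0 a_fits.
    have Qw : Q w by rewrite /Q wS wt fsw.
    by have := bigmin_le_cond (D s - a s) (fun w => f w (par w) - tree_load S par a w) Qw;
      rewrite -/d; lra.
rewrite (bigD1 s) // [X in _ <= X](bigD1 s) //= /a' eqxx.
by rewrite (eq_bigr a) => [|x /negbTE -> //]; lra.
Qed.

Lemma alive_path_to_dead_edge D f f' S par u w : is_mpt_tree E t f S par -> serves D f' ->
  w != t -> (w, par w) \notin pos_edges f' ->
  u \in S -> u \in alive f' -> fconnect par u w ->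
  exists2 u', u' \in alive f' & u' \in S /\ (u', par u') \notin pos_edges f'.
Proof.
move=> tree serves' wt dead_w uS ua /iter_findex; move: (findex _ _ _) => n.
elim: n u uS ua => [|n IH] u uS ua iter_w; first by rewrite -iter_w in dead_w; exists u.
have [pos_u | dead_u] := boolP ((u, par u) \in pos_edges f'); last by exists u.
have [_ par_t in_tree] := tree.
have ut : u != t by move: ua; rewrite inE => /andP[].
have put : par u != t.
  by apply: contra wt => /eqP pu_t; rewrite -iter_w iterSr pu_t iter_fix.
apply: (IH (par u)); last by rewrite -iterSr.
- by have [] := in_tree u uS ut.
- by rewrite inE in pos_u; apply: alive_of_inflow serves' put pos_u.
Qed.

(* Each non-final tree saturates an edge on the path of a source with unmet
   demand; following that path from the source, the first edge whose
   residual flow vanishes leaves a node that stays alive.  Together with the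
   tree edges leaving the nodes that die, this gives [1 + #dead] lost edges. *)
Lemma step_loses_edges D f S par a : serves D f ->
  flow2trees_step E t D f (TreeStep S par a) -> (exists s, a s < D s) ->
  (#|alive f :\: alive (residual_flow t f S par a)|.+1 <=
   #|pos_edges f :\: pos_edges (residual_flow t f S par a)|)%N.
Proof.
move=> serves_f step [s lt_as_Ds].
have serves' := serves_residual serves_f step.
set f' := residual_flow t f S par a in serves' *.
move: (step); rewrite /flow2trees_step /feasible_amounts /=.
move=> [tree spans [a_ge0 _ _ _] _].
have [_ _ in_tree] := tree.
have [w [wS wt fsw saturated]] := max_routing_saturates step lt_as_Ds.
have dead_w : (w, par w) \notin pos_edges f'.
  by rewrite inE /f' /residual_flow wS wt eqxx /= -leNgt subr_le0.
have Ds_gt0 : 0 < D s - a s by rewrite subr_gt0.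
have st : s != t by apply: contraTneq Ds_gt0 => ->; have [_ _ ? _] := serves'; rewrite -leNgt.
have sS : s \in S by apply: spans; have := a_ge0 s; lra.
have sa : s \in alive f' := alive_of_demand serves' st Ds_gt0.
have [u' u'a [u'S dead_u']] := alive_path_to_dead_edge tree serves' wt dead_w sS sa fsw.
have u't : u' != t by move: u'a; rewrite inE => /andP[].
have tree_edge v : v \in S -> v != t -> (v, par v) \in pos_edges f.
  by move=> vS vt; rewrite inE; have [] := in_tree v vS vt.
have lost : [set (v, par v) | v in u' |: (alive f :\: alive f')] \subset
    pos_edges f :\: pos_edges f'.
  apply/subsetP => _ /imsetP[v + ->]; rewrite in_setD.
  move=> /setU1P[-> | /setDP[va v_dead]]; first by rewrite dead_u' tree_edge.
  have vt : v != t by move: va; rewrite inE => /andP[].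
  have vS : v \in S.
    apply: contraNT v_dead => vS; rewrite inE vt /=.
    move: va; rewrite inE => /andP[_ /existsP[x fvx]]; apply/existsP; exists x.
    by rewrite /f' /residual_flow (negbTE vS) subr0.
  rewrite tree_edge // andbT; apply: contra v_dead; rewrite !inE vt => pos_v.
  by apply/existsP; exists (par v).
have := subset_leq_card lost; rewrite card_imset => [|x y [] //].
by rewrite cardsU1 in_setD u'a.
Qed.

Lemma run_bound D f r : serves D f -> flow2trees_run E t D f r ->
  (size r + #|alive f| <= #|pos_edges f| + 1)%N.
Proof.
elim: r D f => [|[S par a] r IH] D f serves_f /=.
  by move=> _; rewrite add0n; apply: leq_trans (card_alive_le f) (leq_addr _ _).
move=> [_ step run].
have serves' := serves_residual serves_f step.
have le_f' x y : residual_flow t f S par a x y <= f x y.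
  by apply: residual_flow_le; move: step => [_ _ []].
have lost := step_loses_edges serves_f step.
set f' := residual_flow t f S par a in serves' run le_f' lost *.
have sub_pos : pos_edges f' \subset pos_edges f.
  by apply/subsetP => e; rewrite !inE => /lt_le_trans; apply.
have sub_alive : alive f' \subset alive f.
  apply/subsetP => v; rewrite !inE => /andP[-> /existsP[w fvw]].
  by apply/existsP; exists w; apply: lt_le_trans fvw _.
have IHr := IH _ _ serves' run.
case: r run {IH} IHr => [_ _ | st r [[s Ds] _ _] IHr].
  by rewrite /= add1n addn1 ltnS card_alive_le.
have /lost : exists s, a s < D s by exists s; rewrite -subr_gt0.
rewrite -(cardsID (alive f') (alive f)) -(cardsID (pos_edges f') (pos_edges f)).
rewrite (setIidPr sub_pos) (setIidPr sub_alive).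
move: IHr => /=; lia.
Qed.

Lemma run_sum_ge0 D f r (G : tree_step R V -> R) : flow2trees_run E t D f r ->
  (forall st, (forall s, 0 <= tr_amt st s) -> 0 <= G st) -> 0 <= \sum_(st <- r) G st.
Proof.
elim: r D f => [|st r IH] D f /=; first by rewrite big_nil.
move=> [_ [_ _ [a_ge0 _ _ _] _] run] G_ge0.
by rewrite big_cons addr_ge0 ?(IH _ _ run) ?G_ge0.
Qed.

End Flow2TreesCount.

Lemma card_pair_fibres (A B : finType) (P : pred (A * B)) :
  #|[set p | P p]| = (\sum_a #|[set b | P (a, b)]|)%N.
Proof.
under eq_bigr do rewrite -sum1dep_card big_mkcond.
by rewrite pair_big -sum1dep_card big_mkcond; apply: eq_bigr => -[].
Qed.

Lemma sum_pair (Rt : Type) (idx : Rt) (op : Monoid.com_law idx) (A B : finType)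
    (F : A * B -> Rt) :
  \big[op/idx]_(p : A * B) F p = \big[op/idx]_a \big[op/idx]_b F (a, b).
Proof. by rewrite pair_big; apply: eq_bigr => -[]. Qed.

Section MultiCommodityFlow.
Variables (R : realFieldType) (T V : finType).
Implicit Type y : T * V * V -> R.

Definition conservation_row (tv : T * V) (i : T * V * V) : R :=
  if i.1.1 == tv.1 then (i.1.2 == tv.2)%:R - (i.2 == tv.2)%:R else 0.

Definition edge_row (e : T -> V * V) (w : T -> R) (i : T * V * V) : R :=
  if (i.1.2, i.2) == e i.1.1 then w i.1.1 else 0.

Lemma sum_delta (A : finType) (a0 : A) (G : A -> R) : \sum_a (a == a0)%:R * G a = G a0.
Proof. by rewrite (bigD1 a0) //= eqxx mul1r big1 ?addr0 // => a /negbTE ->; rewrite mul0r. Qed.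

Lemma sum_conservation_row tv y :
  \sum_i conservation_row tv i * y i = \sum_w y (tv.1, tv.2, w) - \sum_u y (tv.1, u, tv.2).
Proof.
case: tv => t0 v0; rewrite !sum_pair (bigD1 t0) //= [X in _ + X]big1 ?addr0; last first.
  by move=> t /negbTE t_neq; do 2 apply: big1 => ? _; rewrite /conservation_row /= t_neq mul0r.
rewrite /conservation_row /= eqxx.
under eq_bigr do under eq_bigr do rewrite mulrBl.
under eq_bigr do rewrite sumrB.
rewrite sumrB [X in _ - X]exchange_big /=; congr (_ - _).
  by under eq_bigr do rewrite -mulr_sumr; rewrite sum_delta.
by under eq_bigr do rewrite -mulr_sumr; rewrite sum_delta.
Qed.

Lemma sum_edge_row e w y :
  \sum_i edge_row e w i * y i = \sum_t w t * y (t, (e t).1, (e t).2).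
Proof.
rewrite !sum_pair; apply: eq_bigr => t _; rewrite pair_big (bigD1 (e t)) //=.
rewrite /edge_row /= -surjective_pairing eqxx big1 ?addr0 // => uv /negbTE uv_neq.
by rewrite -surjective_pairing uv_neq mul0r.
Qed.

Variables (root : T -> V) (A : {set T}) (D : T -> V -> R).
Variables (J : finType) (Js : {set J}) (cedge : J -> T -> V * V) (cw : J -> T -> R).
Variables (P : (T * V * V -> R) -> Prop) (x : T * V * V -> R).

Local Notation xt t := (fun v w => x (t, v, w)).

Hypothesis x_vertex : extreme_point P x.
Hypothesis x_off : forall t v w, t \notin A -> x (t, v, w) = 0.
Hypothesis x_serves : forall t, t \in A -> serves (root t) (D t) (xt t).
Hypothesis x_perturb : forall y (e : R), 0 < e ->
  (forall i, x i = 0 -> y i = 0) ->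
  (forall t v, t \in A -> v != root t -> \sum_w y (t, v, w) = \sum_u y (t, u, v)) ->
  (forall j, j \in Js -> \sum_t cw j t * y (t, (cedge j t).1, (cedge j t).2) = 0) ->
  (forall i, e * `|y i| <= x i) -> P (fun i => x i + e * y i).

(* At a dead node conservation holds for every perturbation supported on the
   support of [x], so only conservation at alive nodes and the rows [Js] count
   as tight constraints. *)
Lemma multiflow_support_le :
  (\sum_(t in A) #|pos_edges (xt t)| <= \sum_(t in A) #|alive (root t) (xt t)| + #|Js|)%N.
Proof.
have x_ge0 i : 0 <= x i.
  case: i => [[t v] w]; have [tA | tA] := boolP (t \in A); last by rewrite x_off.
  by have [] := x_serves tA.
pose alive_rows := [set tv : T * V | (tv.1 \in A) && (tv.2 \in alive (root tv.1) (xt tv.1))].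
pose c (j : (T * V) + J) := match j with
  | inl tv => conservation_row tv
  | inr j => edge_row (cedge j) (cw j) end.
have support_le : (#|[set i | (0 < x i)%R]| <= #|inl @: alive_rows :|: inr @: Js|)%N.
  apply: (extreme_point_support_le (c := c) x_vertex x_ge0) => y e e_gt0 y0 y_rows y_small.
  apply: x_perturb => // [t v tA vt | j Jsj].
    have [va | dead] := boolP (v \in alive (root t) (xt t)).
      apply/eqP; rewrite -subr_eq0; apply/eqP.
      rewrite -(sum_conservation_row (t, v)); apply: (y_rows (inl (t, v))).
      by rewrite in_setU imset_f // inE tA.
    have [out0 in0] := dead_node_flow0 (x_serves tA) vt dead.
    by rewrite !big1 // => ? _; apply: y0.
  by rewrite -sum_edge_row; apply: (y_rows (inr j)); rewrite in_setU imset_f ?orbT.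
have support_ge : (\sum_(t in A) #|pos_edges (xt t)| <= #|[set i | (0 < x i)%R]|)%N.
  rewrite card_pair_fibres sum_pair [X in (_ <= X)%N](bigID (fun t => t \in A)) /=.
  apply: leq_trans (leq_addr _ _); apply: eq_leq; apply: eq_bigr => t _.
  by rewrite card_pair_fibres.
apply: leq_trans support_ge (leq_trans support_le _).
apply: leq_trans (leq_card_setU _ _).1 _.
rewrite !card_imset; [|exact: inr_inj | exact: inl_inj].
rewrite leq_add2r card_pair_fibres (bigID (fun t => t \in A)) /= [X in (_ + X)%N]big1 ?addn0.
  by apply: eq_leq; apply: eq_bigr => t tA; apply: eq_card => v; rewrite !inE tA.
by move=> t /negbTE tA; apply/eqP; rewrite cards_eq0; apply/eqP/setP => v; rewrite !inE tA.
Qed.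

Lemma multiflow_tree_count (E : rel V) (r : T -> seq (tree_step R V)) :
  (forall t, t \in A -> flow2trees_run E (root t) (D t) (xt t) (r t)) ->
  (\sum_(t in A) size (r t) <= #|A| + #|Js|)%N.
Proof.
move=> runs.
have per_tree : (\sum_(t in A) (size (r t) + #|alive (root t) (xt t)|) <=
    \sum_(t in A) (#|pos_edges (xt t)| + 1))%N.
  by apply: leq_sum => t tA; apply: run_bound (x_serves tA) (runs t tA).
move: per_tree multiflow_support_le; rewrite !big_split /= sum1_card; lia.
Qed.

End MultiCommodityFlow.

Section Network.
Variables (R : realFieldType) (V0 : finType) (E0 : rel V0) (Vpm : {set V0}).
Variables (g : V0 -> V0 -> R) (b : V0 -> R).
Variables (M C : nat) (src dst : 'I_M -> V0) (dem : 'I_M -> R)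
          (cls : 'I_M -> 'I_C) (p : 'I_C -> R).
Hypothesis dem_gt0 : forall i, 0 < dem i.

Definition switch_edges : {set V0 * V0} := [set e | E2 E0 Vpm e.1 e.2].

Lemma nb_edges_ge : pm_structure E0 Vpm ->
  (#|switch_edges| + #|Vpm| + #|Vswpm E0 Vpm| <= nb_edges E0)%N.
Proof.
move=> [pm_link _].
pose from_pm := [set e : V0 * V0 | E0 e.1 e.2 && (e.1 \in Vpm)].
pose to_pm := [set e : V0 * V0 | E0 e.1 e.2 && (e.2 \in Vpm)].
have card_from : (#|Vpm| <= #|from_pm|)%N.
  apply: leq_trans (leq_imset_card fst from_pm); apply: subset_leq_card.
  apply/subsetP => u uP; have [v [_ uv _ _]] := pm_link u uP.
  by apply/imsetP; exists (u, v); rewrite // inE /= uv uP.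
have card_to : (#|Vswpm E0 Vpm| <= #|to_pm|)%N.
  apply: leq_trans (leq_imset_card fst to_pm); apply: subset_leq_card.
  apply/subsetP => v; rewrite inE => /andP[_ /existsP[u /andP[uP uv]]].
  have [v' [_ _ v'u only_v']] := pm_link u uP.
  have -> : v = v' by apply: only_v'; rewrite uv.
  by apply/imsetP; exists (v', u); rewrite // inE /= v'u uP.
have pm_not_adjacent x y : E0 x y -> x \in Vpm -> y \notin Vpm.
  move=> xy xP; have [v [vNpm _ _ only_v]] := pm_link x xP.
  by rewrite (only_v y) ?xy.
suff : (#|switch_edges| + #|from_pm| + #|to_pm| <= nb_edges E0)%N by lia.
have card_sum (S : {set V0 * V0}) : #|S| = (\sum_e (e \in S : nat))%N.
  by rewrite -sum1_card big_mkcond; apply: eq_bigr => e _; case: (e \in S).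
rewrite /nb_edges !card_sum -!big_split /=.
apply: leq_sum => -[x y] _; rewrite !inE /= /E2.
have [xy | _] /= := boolP (E0 x y); last by [].
have [xP | xP] /= := boolP (x \in Vpm); first by rewrite (negbTE (pm_not_adjacent _ _ xy xP)).
by case: (y \in Vpm).
Qed.

Lemma step1_tree_count (f1 : X1 V0 C -> R) (r1 : 'I_C -> seq (tree_step R (V1 V0 C))) :
  extreme_point (lp1_feasible E0 Vpm g b src dem cls p) f1 ->
  (forall k, flow2trees_run (@E1 V0 E0 Vpm C) (inr k) (d1 src dem cls k)
               (fun x y => f1 (k, x, y)) (r1 k)) ->
  (\sum_(k < C) size (r1 k) <= C + #|switch_edges| + 2 * #|Vswpm E0 Vpm|)%N.
Proof.
move=> vertex runs; have [[f1_off f1_ge0 f1_cons f1_cap [f1_link f1_proc]] _] := vertex.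
pose rows := inl @: switch_edges :|: inr @: setX [set: bool] (Vswpm E0 Vpm).
pose cedge (j : (V0 * V0) + (bool * V0)) (k : 'I_C) : V1 V0 C * V1 V0 C :=
  match j with inl e => (inl e.1, inl e.2) | inr bv => (inl bv.2, inr k) end.
pose cw (j : (V0 * V0) + (bool * V0)) (k : 'I_C) : R :=
  match j with inr (true, _) => p k | _ => 1 end.
have serves1 k : k \in [set: 'I_C] ->
    serves (inr k) (d1 src dem cls k) (fun x y => f1 (k, x, y)).
  split=> // [[v | _] | v vt] //=; last by rewrite f1_cons.
  by apply: sumr_ge0 => i _; apply: ltW.
have off k v w : k \notin [set: 'I_C] -> f1 (k, v, w) = 0 by rewrite in_setT.
have card_rows : (#|rows| <= #|switch_edges| + 2 * #|Vswpm E0 Vpm|)%N.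
  apply: leq_trans (leq_card_setU _ _).1 _.
  by rewrite !card_imset ?cardsX ?cardsT ?card_bool //; [exact: inr_inj | exact: inl_inj].
suff : (\sum_(k in [set: 'I_C]) size (r1 k) <= #|[set: 'I_C]| + #|rows|)%N.
  under eq_bigl do rewrite in_setT; rewrite cardsT card_ord -addnA => /leq_trans; apply.
  by rewrite leq_add2l.
apply: (multiflow_tree_count (cedge := cedge) (cw := cw) vertex off serves1 _
  (fun k _ => runs k)).
move=> y e e_gt0 y0 y_cons y_rows y_small; split.
- by move=> k u v uv; rewrite f1_off // y0 ?f1_off // mulr0 addr0.
- by move=> k u v; apply: perturb_ge0.
- move=> k v vt; rewrite !big_split /= -!mulr_sumr y_cons ?in_setT //.
  by have := f1_cons k v vt; lra.
- move=> u v uv; rewrite big_split /= -mulr_sumr.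
  have /y_rows /= : inl (u, v) \in rows by rewrite in_setU imset_f // inE.
  by under eq_bigr do rewrite mul1r; move=> ->; rewrite mulr0 addr0 f1_cap.
split=> v u vsw uP uv.
- rewrite big_split /= -mulr_sumr.
  have /y_rows /= : inr (false, v) \in rows.
    by rewrite in_setU imset_f ?orbT // in_setX in_setT vsw.
  by under eq_bigr do rewrite mul1r; move=> ->; rewrite mulr0 addr0 (f1_link _ u).
- under eq_bigr do rewrite mulrDr mulrCA; rewrite big_split /= -mulr_sumr.
  have /y_rows /= : inr (true, v) \in rows.
    by rewrite in_setU imset_f ?orbT // in_setX in_setT vsw.
  by move=> ->; rewrite mulr0 addr0 (f1_proc _ u).
Qed.

Lemma d2_ge0 (f1 : X1 V0 C -> R) (r1 : 'I_C -> seq (tree_step R (V1 V0 C))) t v :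
  (forall k, flow2trees_run (@E1 V0 E0 Vpm C) (inr k) (d1 src dem cls k)
               (fun x y => f1 (k, x, y)) (r1 k)) ->
  0 <= d2 src dst dem cls r1 t v.
Proof.
move=> runs; apply: sumr_ge0 => k _; apply: (run_sum_ge0 (runs k)) => st a_ge0.
apply: sumr_ge0 => s _; apply: mulr_ge0 => //.
by apply: divr_ge0; apply: sumr_ge0 => i _; apply: ltW.
Qed.

Lemma step2_tree_count (f1 : X1 V0 C -> R) (r1 : 'I_C -> seq (tree_step R (V1 V0 C)))
    (f2 : X2 V0 -> R) (r2 : V0 -> seq (tree_step R V0)) :
  (forall k, flow2trees_run (@E1 V0 E0 Vpm C) (inr k) (d1 src dem cls k)
               (fun x y => f1 (k, x, y)) (r1 k)) ->
  extreme_point (lp2_feasible E0 Vpm g src dst dem cls f1 r1) f2 ->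
  (forall t, t \in VT dst ->
     flow2trees_run (E2 E0 Vpm) t (fun v => if v == t then 0 else d2 src dst dem cls r1 t v)
       (fun x y => f2 (t, x, y)) (r2 t)) ->
  (\sum_(t in VT dst) size (r2 t) <= #|VT dst| + #|switch_edges|)%N.
Proof.
move=> runs1 vertex runs2; have [[f2_off f2_ge0 f2_cons f2_cap] _] := vertex.
have off t v w : t \notin VT dst -> f2 (t, v, w) = 0 by move=> tV; rewrite f2_off // (negbTE tV).
have serves2 t : t \in VT dst -> serves t
    (fun v => if v == t then 0 else d2 src dst dem cls r1 t v) (fun x y => f2 (t, x, y)).
  move=> tV; split=> // [v | | v vt]; rewrite ?eqxx //.
    by case: eqP => // _; apply: d2_ge0.
  by rewrite (negbTE vt) f2_cons.
apply: (multiflow_tree_count (cedge := fun e _ => e) (cw := fun _ _ => 1)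
  vertex off serves2 _ runs2).
move=> y e e_gt0 y0 y_cons y_rows y_small; split.
- by move=> t u v tuv; rewrite f2_off // y0 ?f2_off // mulr0 addr0.
- by move=> t u v; apply: perturb_ge0.
- move=> t v tV vt; rewrite !big_split /= -!mulr_sumr y_cons //.
  by have := f2_cons t v tV vt; lra.
- move=> u v uv; rewrite big_split /= -mulr_sumr.
  have /y_rows /= : (u, v) \in switch_edges by rewrite inE.
  under eq_bigr do rewrite mul1r.
  rewrite (bigID (fun t => t \in VT dst)) /= [X in _ + X]big1 => [|t tV]; last by rewrite y0 ?off.
  by rewrite addr0 => ->; rewrite mulr0 addr0 f2_cap.
Qed.

End Network.

Unset Implicit Arguments.

Theorem theorem1 (R : realFieldType) (V0 : finType) (E0 : rel V0)
  (Vpm : {set V0}) (g : V0 -> V0 -> R) (b : V0 -> R)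
  (M C : nat) (src dst : 'I_M -> V0) (dem : 'I_M -> R)
  (cls : 'I_M -> 'I_C) (p : 'I_C -> R)
  (Hpm : pm_structure E0 Vpm)
  (Hg : forall u v, E0 u v -> 0 <= g u v)
  (Hb : forall u, u \in Vpm -> 0 <= b u)
  (Hsrc : forall i, src i \notin Vpm)
  (Hdst : forall i, dst i \notin Vpm)
  (Hdem : forall i, 0 < dem i)
  (Hcls : forall k, exists i, cls i = k)
  (Hp : forall k, 0 < p k)
  (* Step 1: an optimal basic feasible solution and runs of Flow2Trees *)
  (f1 : X1 V0 C -> R)
  (Hf1 : optimal_bfs (lp1_feasible E0 Vpm g b src dem cls p) (@lp_obj R _) f1)
  (r1 : 'I_C -> seq (tree_step R (V1 V0 C)))
  (Hr1 : forall k, flow2trees_run (@E1 V0 E0 Vpm C) (inr k) (d1 src dem cls k)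
                     (fun x y => f1 (k, x, y)) (r1 k))
  (* Step 2: an optimal basic feasible solution and runs of Flow2Trees *)
  (f2 : X2 V0 -> R)
  (Hf2 : optimal_bfs (lp2_feasible E0 Vpm g src dst dem cls f1 r1) (@lp_obj R _) f2)
  (r2 : V0 -> seq (tree_step R V0))
  (Hr2 : forall t, t \in VT dst ->
           flow2trees_run (E2 E0 Vpm) t
             (fun v => if v == t then 0 else d2 src dst dem cls r1 t v)
             (fun x y => f2 (t, x, y)) (r2 t)) :
  (\sum_(k < C) size (r1 k) + \sum_(t in VT dst) size (r2 t) + 2 * #|Vpm|
     <= C + 2 * nb_edges E0 + #|VT dst|)%N.
Proof.
have step1 := step1_tree_count Hdem Hf1.1 Hr1.
have step2 := step2_tree_count Hdem Hr1 Hf2.1 Hr2.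
have edges := nb_edges_ge Hpm.
lia.
Qed.
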